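(* Let $\mathcal{F}$ be a frame, let $C_s, C_{cut}, C_o \subseteq \mathcal{CH}$ be sets of channels such that $C_{cut}$ is an undirected cut between $C_s$ and $C_o$, and let $f$ be a function on sets of $C_s$-runs. If $\mathcal{F}$ $f$-limits $C_s$-to-$C_{cut}$ flow, then $\mathcal{F}$ $f$-limits $C_s$-to-$C_o$ flow.
   Context: A frame $\mathcal{F}$ consists of pairwise disjoint sets $\mathcal{LO}$ (locations), $\mathcal{CH}$ (channels) and $\mathcal{D}$ (data values). Each channel $c$ either has both a sender location $\mathrm{sender}(c)\in\mathcal{LO}$ and a recipient location $\mathrm{recipient}(c)\in\mathcal{LO}$ (possibly equal), or has neither. For $\ell\in\mathcal{LO}$ let $\mathrm{chans}(\ell)=\{c:\mathrm{sender}(c)=\ell \text{ or } \mathrm{recipient}(c)=\ell\}$. Each location $\ell$ carries a prefix-closed set $\mathrm{traces}(\ell)$ of finite or infinite sequences of labels $(c,v)$ with $c\in\mathrm{chans}(\ell)$, $v\in\mathcal{D}$. Fix a set $E$ of events with functions $\mathrm{chan}:E\to\mathcal{CH}$, $\mathrm{msg}:E\to\mathcal{D}$. A system of events is $\mathcal{B}=(B,\preceq)$ with $B\subseteq E$ and $\preceq$ a partial order on $B$ in which every event has only finitely many predecessors. It is an execution of $\mathcal{F}$, written $\mathcal{B}\in\mathrm{exec}(\mathcal{F})$, iff for every location $\ell$ the set $\{e\in B:\mathrm{sender}(\mathrm{chan}(e))=\ell \text{ or } \mathrm{recipient}(\mathrm{chan}(e))=\ell\}$ is linearly ordered by $\preceq$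 and, read in $\preceq$-order as the sequence of labels $(\mathrm{chan}(e),\mathrm{msg}(e))$, belongs to $\mathrm{traces}(\ell)$. For $C\subseteq\mathcal{CH}$, the restriction $\mathcal{B}|_C$ is $(\{e\in B:\mathrm{chan}(e)\in C\},\ \preceq$ restricted to that set$)$. A $C$-run is a system of events $\mathcal{A}|_C$ with $\mathcal{A}\in\mathrm{exec}(\mathcal{F})$. For $C,C'\subseteq\mathcal{CH}$ and a system of events $\mathcal{B}$, let $J_{C}^{C'}(\mathcal{B})=\{\mathcal{A}|_{C'}:\mathcal{A}\in\mathrm{exec}(\mathcal{F}),\ \mathcal{A}|_C=\mathcal{B}\}$ (the $C'$-runs compatible with $\mathcal{B}$). The undirected graph of $\mathcal{F}$ has vertices $\mathcal{LO}$; an undirected path is a sequence of locations $\ell_0,\dots,\ell_n$ together with channels $c_1,\dots,c_n$ where each $c_k$ has endpoints $\ell_{k-1},\ell_k$ in some direction; the path traverses the $c_k$. $C_{cut}$ is an undirected cut between $C_s$ and $C_o$ iff $C_s,C_{cut},C_o$ are pairwise disjoint and every undirected path from a location that is an endpoint of a channel in $C_o$ to a location that is an endpoint of a channel in $C_s$ traverses some channel in $C_{cut}$. A function $f$ on sets is a blur operator iff (i) $S\subseteq f(S)$ for all $S$; (ii) $f(f(S))=f(S)$ for all $S$; (iii) $f(\bigcup_{a\in I}S_a)=\bigcup_{a\in I}f(S_a)$ for every indexed family. A set $S$ is $f$-blurred iff $f$ is a blur operator and $f(S)=S$. $\mathcal{F}$ $f$-limits $C_s$-to-$C_o$ flow iff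 $f$ is a blur operator and for every $C_o$-run $\mathcal{B}_o$ the set $J_{C_o}^{C_s}(\mathcal{B}_o)$ is $f$-blurred. *)

(* Sets are predicates; equalities of sets / systems of
   events are Leibniz equalities (funext/propext are allowed in proofs). *)
From Stdlib Require Import List.
Import ListNotations.
Set Implicit Arguments.

Definition set (T : Type) := T -> Prop.

(* A frame is given by three types LO (locations), CH (channels), D (data)
   -- distinct types, hence pairwise disjoint -- together with
   ends : CH -> option (LO * LO)  (Some (sender, recipient) or None)
   traces : LO -> set trace. *)

Definition label (CH D : Type) := (CH * D)%type.

(* A finite or infinite sequence of labels: position n holds Some label,
   or None once the sequence has ended (see [is_seq]). *)
Definition trace (CH D : Type) := nat -> option (label CH D).

Definition is_seq (CH D : Type) (t : trace CH D) : Prop :=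
  forall n, t n = None -> t (S n) = None.

Definition at_loc (LO CH : Type) (ends : CH -> option (LO * LO)) (l : LO) (c : CH)
  : Prop :=
  exists m, ends c = Some (l, m) \/ ends c = Some (m, l).

Definition prefix (CH D : Type) (k : nat) (t : trace CH D) : trace CH D :=
  fun n => if Nat.ltb n k then t n else None.

Definition is_frame (LO CH D : Type) (ends : CH -> option (LO * LO))
  (traces : LO -> set (trace CH D)) : Prop :=
  (forall l t, traces l t -> is_seq t) /\
  (forall l t n c v, traces l t -> t n = Some (c, v) -> at_loc ends l c) /\
  (forall l t k, traces l t -> traces l (prefix k t)).

Definition sys (E : Type) := (set E * (E -> E -> Prop))%type.

Definition is_sys (E : Type) (Bs : sys E) : Prop :=
  let (B, le) := Bs in
  (forall x y, le x y -> B x /\ B y) /\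
  (forall x, B x -> le x x) /\
  (forall x y, le x y -> le y x -> x = y) /\
  (forall x y z, le x y -> le y z -> le x z) /\
  (forall e, B e -> exists l : list E, forall x, le x e -> In x l).

Definition rank (E : Type) (le : E -> E -> Prop) (S : set E) (e : E) (n : nat)
  : Prop :=
  exists l : list E, NoDup l /\ length l = n /\
    forall x, In x l <-> (S x /\ le x e /\ x <> e).

Definition reads (CH D E : Type) (chan : E -> CH) (msg : E -> D)
  (le : E -> E -> Prop) (S : set E) (t : trace CH D) : Prop :=
  forall n, match t n with
            | None => ~ (exists e, S e /\ rank le S e n)
            | Some lab => exists e, S e /\ rank le S e n /\ lab = (chan e, msg e)
            end.

Definition exec (LO CH D E : Type) (ends : CH -> option (LO * LO))
  (traces : LO -> set (trace CH D)) (chan : E -> CH) (msg : E -> D)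
  (A : sys E) : Prop :=
  is_sys A /\
  forall l : LO,
    let S := fun e => fst A e /\ at_loc ends l (chan e) in
    (forall x y, S x -> S y -> snd A x y \/ snd A y x) /\
    exists t, traces l t /\ reads chan msg (snd A) S t.

Definition restrict (CH E : Type) (chan : E -> CH) (C : set CH) (A : sys E)
  : sys E :=
  (fun e => fst A e /\ C (chan e),
   fun x y => snd A x y /\ C (chan x) /\ C (chan y)).

Definition is_run (LO CH D E : Type) (ends : CH -> option (LO * LO))
  (traces : LO -> set (trace CH D)) (chan : E -> CH) (msg : E -> D)
  (C : set CH) (X : sys E) : Prop :=
  exists A, exec ends traces chan msg A /\ X = restrict chan C A.

Definition J (LO CH D E : Type) (ends : CH -> option (LO * LO))
  (traces : LO -> set (trace CH D)) (chan : E -> CH) (msg : E -> D)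
  (C C' : set CH) (B : sys E) : set (sys E) :=
  fun X => exists A, exec ends traces chan msg A /\
             restrict chan C A = B /\ X = restrict chan C' A.

Definition connects (LO CH : Type) (ends : CH -> option (LO * LO))
  (c : CH) (l m : LO) : Prop :=
  ends c = Some (l, m) \/ ends c = Some (m, l).

Inductive upath (LO CH : Type) (ends : CH -> option (LO * LO))
  : LO -> LO -> list CH -> Prop :=
| upath_nil : forall l, upath ends l l []
| upath_cons : forall l m n c p,
    connects ends c l m -> upath ends m n p -> upath ends l n (c :: p).

Definition undirected_cut (LO CH : Type) (ends : CH -> option (LO * LO))
  (Cs Ccut Co : set CH) : Prop :=
  (forall c, ~ (Cs c /\ Ccut c)) /\
  (forall c, ~ (Cs c /\ Co c)) /\
  (forall c, ~ (Ccut c /\ Co c)) /\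
  (forall lo ls p co cs,
      Co co -> at_loc ends lo co -> Cs cs -> at_loc ends ls cs ->
      upath ends lo ls p -> exists c, In c p /\ Ccut c).

Definition subset (T : Type) (A B : set T) := forall x, A x -> B x.

Definition bigcup (T I : Type) (F : I -> set T) : set T :=
  fun x => exists a, F a x.

Definition blur_on (T : Type) (U : set T) (f : set T -> set T) : Prop :=
  (forall S, subset S U -> subset (f S) U) /\
  (forall S, subset S U -> subset S (f S)) /\
  (forall S, subset S U -> f (f S) = f S) /\
  (forall (I : Type) (F : I -> set T), (forall a, subset (F a) U) ->
      f (bigcup F) = bigcup (fun a => f (F a))).

Definition blurred (T : Type) (U : set T) (f : set T -> set T) (S : set T) :=
  blur_on U f /\ f S = S.

Definition f_limits (LO CH D E : Type) (ends : CH -> option (LO * LO))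
  (traces : LO -> set (trace CH D)) (chan : E -> CH) (msg : E -> D)
  (f : set (sys E) -> set (sys E)) (Cs Co : set CH) : Prop :=
  blur_on (is_run ends traces chan msg Cs) f /\
  forall Bo, is_run ends traces chan msg Co Bo ->
    blurred (is_run ends traces chan msg Cs) f (J ends traces chan msg Co Cs Bo).

From Stdlib Require Import List Classical FunctionalExtensionality PropExtensionality.
Import ListNotations.
Set Implicit Arguments.

(* Call a location a source location if an undirected path avoiding [Ccut] joins
   it to an endpoint of a [Cs] channel, and a channel a source channel if it is
   in [Cs] or touches a source location.  Two executions that agree on [Ccut]
   can be glued: take the events of the first on the non-source channels, those
   of the second on the source channels, and both on [Ccut], where they
   coincide; order them by the two orders composed through cut events.  Every
   location sees only one of the two executions (a non-source location only
   touches source channels that are cut channels), and the cut property makes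
   every [Co] channel non-source.  So the glued system is an execution agreeing
   with the first on [Co] and with the second on [Cs], whence
   J_Co^Cs(Bo) = U { J_Ccut^Cs(Bc) | Bc in J_Co^Ccut(Bo) }.  Each piece is
   f-blurred and blur operators commute with unions. *)

Definition agree_on (E : Type) (Y : set E) (A A' : sys E) : Prop :=
  (forall e, Y e -> (fst A e <-> fst A' e)) /\
  (forall x y, Y x -> Y y -> (snd A x y <-> snd A' x y)).

Section AgreeOn.

Variable E : Type.

Lemma agree_on_sym (Y : set E) (A A' : sys E) : agree_on Y A A' -> agree_on Y A' A.
Proof. intros [Hs Hr]; split; intros; symmetry; auto. Qed.

Lemma agree_on_trans (Y : set E) (A A' A'' : sys E) :
  agree_on Y A A' -> agree_on Y A' A'' -> agree_on Y A A''.
Proof.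
  intros [Hs1 Hr1] [Hs2 Hr2]; split; intros; etransitivity; eauto.
Qed.

Variables (CH : Type) (chan : E -> CH).

Lemma restrict_agree_on (C : set CH) (A A' : sys E) :
  agree_on (fun e => C (chan e)) A A' -> restrict chan C A = restrict chan C A'.
Proof.
  intros [Hs Hr]; unfold restrict; f_equal.
  - apply functional_extensionality; intro e; apply propositional_extensionality.
    firstorder.
  - do 2 (apply functional_extensionality; intro).
    apply propositional_extensionality; firstorder.
Qed.

Lemma agree_on_restrict_eq (C : set CH) (A A' : sys E) :
  restrict chan C A = restrict chan C A' -> agree_on (fun e => C (chan e)) A A'.
Proof.
  intros Heq; split.
  - intros e He.
    pose proof (f_equal (fun S => fst S e) Heq) as H; simpl in H.
    split; intro Hx; [assert (K : fst A' e /\ C (chan e)) by (rewrite <- H; auto)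
                     |assert (K : fst A e /\ C (chan e)) by (rewrite H; auto)];
      apply K.
  - intros x y Hx Hy.
    pose proof (f_equal (fun S => snd S x y) Heq) as H; simpl in H.
    split; intro Hxy;
      [assert (K : snd A' x y /\ C (chan x) /\ C (chan y)) by (rewrite <- H; auto)
      |assert (K : snd A x y /\ C (chan x) /\ C (chan y)) by (rewrite H; auto)];
      apply K.
Qed.

Lemma agree_on_restrict (Y : set E) (C : set CH) (A : sys E) :
  (forall e, Y e -> C (chan e)) -> agree_on Y (restrict chan C A) A.
Proof. intros HY; split; simpl; firstorder. Qed.

Lemma is_sys_restrict (C : set CH) (A : sys E) : is_sys A -> is_sys (restrict chan C A).
Proof.
  destruct A as [B le]; simpl.
  intros (Hdom & Hrefl & Hanti & Htrans & Hfin).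
  split; [|split; [|split; [|split]]].
  - intros x y [Hxy [Hx Hy]]; repeat split; auto; apply (Hdom x y Hxy).
  - intros x [Hx HC]; auto.
  - intros x y [Hxy _] [Hyx _]; auto.
  - intros x y z [Hxy [Hx _]] [Hyz [_ Hz]]; eauto.
  - intros e [Be _]; destruct (Hfin e Be) as [l Hl].
    exists l; intros x [Hx _]; auto.
Qed.

End AgreeOn.

Definition finitely_preceded (E : Type) (R : E -> E -> Prop) : Prop :=
  forall e, exists l : list E, forall x, R x e -> In x l.

Section FinitelyPreceded.

Variable E : Type.
Implicit Types (R S : E -> E -> Prop).

Lemma is_sys_finitely_preceded (X : set E) R :
  is_sys (X, R) -> finitely_preceded R.
Proof.
  intros (Hdom & _ & _ & _ & Hfin) e.
  destruct (classic (X e)) as [He|He]; [exact (Hfin e He)|].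
  exists []; intros x Hx; exact (He (proj2 (Hdom x e Hx))).
Qed.

Lemma finitely_preceded_mono R S :
  (forall x y, R x y -> S x y) -> finitely_preceded S -> finitely_preceded R.
Proof. intros HRS HS e; destruct (HS e) as [l Hl]; exists l; auto. Qed.

Lemma finitely_preceded_or R S :
  finitely_preceded R -> finitely_preceded S ->
  finitely_preceded (fun x y => R x y \/ S x y).
Proof.
  intros HR HS e; destruct (HR e) as [l1 H1], (HS e) as [l2 H2].
  exists (l1 ++ l2); intros x [Hx|Hx]; apply in_or_app; auto.
Qed.

Lemma finitely_preceded_comp R S :
  finitely_preceded R -> finitely_preceded S ->
  finitely_preceded (fun x y => exists c, R x c /\ S c y).
Proof.
  intros HR HS e; destruct (HS e) as [l Hl].
  assert (Hcover : exists L, forall c x, In c l -> R x c -> In x L).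
  { clear Hl; induction l as [|a l [L HL]].
    - exists []; intros c x [].
    - destruct (HR a) as [la Hla]; exists (la ++ L).
      intros c x [<-|Hc] Hx; apply in_or_app; eauto. }
  destruct Hcover as [L HL]; exists L.
  intros x [c [Hxc Hce]]; eauto.
Qed.

End FinitelyPreceded.

(* The relation generated by [R1] and [R2]: when they agree on the shared
   events [K], a chain needs to pass through [K] at most once. *)
Definition glue_le (E : Type) (K : set E) (R1 R2 : E -> E -> Prop) (x y : E) : Prop :=
  R1 x y \/ R2 x y \/
  (exists c, K c /\ R1 x c /\ R2 c y) \/ (exists c, K c /\ R2 x c /\ R1 c y).

Definition glue_sys (E : Type) (K : set E) (S1 S2 : sys E) : sys E :=
  (fun e => fst S1 e \/ fst S2 e, glue_le K (snd S1) (snd S2)).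

Definition glue_compatible (E : Type) (K : set E) (S1 S2 : sys E) : Prop :=
  is_sys S1 /\ is_sys S2 /\ (forall e, fst S1 e -> fst S2 e -> K e) /\ agree_on K S1 S2.

Lemma glue_le_comm (E : Type) (K : set E) (R1 R2 : E -> E -> Prop) (x y : E) :
  glue_le K R1 R2 x y <-> glue_le K R2 R1 x y.
Proof. unfold glue_le; tauto. Qed.

Lemma glue_compatible_sym (E : Type) (K : set E) S1 S2 :
  glue_compatible K S1 S2 -> glue_compatible K S2 S1.
Proof.
  intros (H1 & H2 & Hov & Hag); split; [|split; [|split]]; auto using agree_on_sym.
Qed.

Section GlueOneSide.

Variables (E : Type) (K : set E) (X1 X2 : set E) (p1 p2 : E -> E -> Prop).
Hypothesis Hcomp : glue_compatible K (X1, p1) (X2, p2).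

Let dom1 : forall x y, p1 x y -> X1 x /\ X1 y := proj1 (proj1 Hcomp).
Let dom2 : forall x y, p2 x y -> X2 x /\ X2 y := proj1 (proj1 (proj2 Hcomp)).
Let trans1 : forall x y z, p1 x y -> p1 y z -> p1 x z :=
  proj1 (proj2 (proj2 (proj2 (proj1 Hcomp)))).
Let overlap : forall e, X1 e -> X2 e -> K e := proj1 (proj2 (proj2 Hcomp)).
Let agree_le : forall x y, K x -> K y -> (p1 x y <-> p2 x y) :=
  proj2 (proj2 (proj2 (proj2 Hcomp))).

Lemma glue_le_dom x y :
  glue_le K p1 p2 x y -> (X1 x \/ X2 x) /\ (X1 y \/ X2 y).
Proof.
  intros [H|[H|[[c [_ [H H']]]|[c [_ [H H']]]]]].
  - destruct (dom1 H); auto.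
  - destruct (dom2 H); auto.
  - split; [left; apply (dom1 H)|right; apply (dom2 H')].
  - split; [right; apply (dom2 H)|left; apply (dom1 H')].
Qed.

Lemma glue_le_sub1 x y :
  glue_le K p1 p2 x y -> X1 x -> X1 y -> p1 x y.
Proof.
  intros [H|[H|[[c [Kc [H H']]]|[c [Kc [H H']]]]]] Hx Hy.
  - exact H.
  - destruct (dom2 H) as [Hx2 Hy2].
    apply agree_le; auto.
  - assert (Ky : K y) by (apply overlap; [exact Hy|apply (dom2 H')]).
    apply (trans1 H), agree_le; auto.
  - assert (Kx : K x) by (apply overlap; [exact Hx|apply (dom2 H)]).
    apply (trans1 (y := c)); [apply agree_le|]; auto.
Qed.

Lemma glue_le_step1 x y z :
  glue_le K p1 p2 x y -> p1 y z -> glue_le K p1 p2 x z.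
Proof.
  intros [H|[H|[[c [Kc [H H']]]|[c [Kc [H H']]]]]] Hyz.
  - left; exact (trans1 H Hyz).
  - assert (Ky : K y) by (apply overlap; [apply (dom1 Hyz)|apply (dom2 H)]).
    right; right; right; exists y; auto.
  - assert (Ky : K y) by (apply overlap; [apply (dom1 Hyz)|apply (dom2 H')]).
    left; apply (trans1 H), (trans1 (y := y)); [apply agree_le|]; auto.
  - right; right; right; exists c; split; [|split]; eauto.
Qed.

Lemma glue_le_cross x y :
  glue_le K p1 p2 x y -> ~ X2 x -> ~ X1 y -> exists c, K c /\ p1 x c /\ p2 c y.
Proof.
  intros [H|[H|[H|[c [_ [H _]]]]]] Nx Ny.
  - exfalso; exact (Ny (proj2 (dom1 H))).
  - exfalso; exact (Nx (proj1 (dom2 H))).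
  - exact H.
  - exfalso; exact (Nx (proj1 (dom2 H))).
Qed.

Lemma glue_sys_agree_on1 (Y : set E) :
  (forall e, Y e -> X2 e -> X1 e) -> agree_on Y (glue_sys K (X1, p1) (X2, p2)) (X1, p1).
Proof.
  intros HY; split; simpl.
  - intros e He; split; [intros [H|H]|]; auto.
  - intros x y Hx Hy; split; [|intro H; left; exact H].
    intro H; destruct (glue_le_dom H) as [[Hx1|Hx2] [Hy1|Hy2]];
      apply glue_le_sub1; auto.
Qed.

End GlueOneSide.

Section GlueSys.

Variables (E : Type) (K : set E) (X1 X2 : set E) (p1 p2 : E -> E -> Prop).
Hypothesis Hcomp : glue_compatible K (X1, p1) (X2, p2).

Let Hcomp' : glue_compatible K (X2, p2) (X1, p1) := glue_compatible_sym Hcomp.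

Lemma glue_le_step2 x y z :
  glue_le K p1 p2 x y -> p2 y z -> glue_le K p1 p2 x z.
Proof.
  rewrite !(glue_le_comm K p1 p2); apply (glue_le_step1 Hcomp').
Qed.

Lemma glue_le_trans x y z :
  glue_le K p1 p2 x y -> glue_le K p1 p2 y z -> glue_le K p1 p2 x z.
Proof.
  intros Hxy [H|[H|[[c [_ [H H']]]|[c [_ [H H']]]]]].
  - exact (glue_le_step1 Hcomp _ Hxy H).
  - exact (glue_le_step2 Hxy H).
  - exact (glue_le_step2 (glue_le_step1 Hcomp _ Hxy H) H').
  - exact (glue_le_step1 Hcomp _ (glue_le_step2 Hxy H) H').
Qed.

(* Each of [x], [y] lies on one side only, so both comparisons pass through cut
   events [c], [d]; then [x <=1 c <=1 d <=1 x] forces [x = d], a cut event. *)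
Lemma glue_le_antisym_cross x y :
  glue_le K p1 p2 x y -> glue_le K p1 p2 y x ->
  X1 x -> ~ X2 x -> X2 y -> ~ X1 y -> False.
Proof.
  pose proof Hcomp as ((_ & _ & anti1 & trans1 & _) & (_ & _ & _ & trans2 & _) &
                     _ & agree_set & agree_le).
  intros Hxy Hyx Hx1 Nx2 Hy2 Ny1.
  destruct (glue_le_cross Hcomp Hxy Nx2 Ny1) as [c [Kc [Hxc Hcy]]].
  apply glue_le_comm in Hyx.
  destruct (glue_le_cross Hcomp' Hyx Ny1 Nx2) as [d [Kd [Hyd Hdx]]].
  simpl in *.
  assert (Hcd : p1 c d) by (apply agree_le; eauto).
  assert (Hxd : x = d) by (apply anti1; eauto).
  subst d; apply Nx2, agree_set; auto.
Qed.

Lemma glue_le_antisym x y :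
  glue_le K p1 p2 x y -> glue_le K p1 p2 y x -> x = y.
Proof.
  pose proof Hcomp as ((_ & _ & anti1 & _) & (_ & _ & anti2 & _) & _).
  intros Hxy Hyx.
  destruct (classic (X1 x /\ X1 y)) as [[Hx Hy]|N1].
  { apply anti1; apply (glue_le_sub1 Hcomp); auto. }
  destruct (classic (X2 x /\ X2 y)) as [[Hx Hy]|N2].
  { apply anti2; rewrite glue_le_comm in *; apply (glue_le_sub1 Hcomp'); auto. }
  exfalso; destruct (glue_le_dom Hcomp Hxy) as [[Hx|Hx] [Hy|Hy]]; try tauto.
  - apply (glue_le_antisym_cross Hxy Hyx); tauto.
  - apply (glue_le_antisym_cross Hyx Hxy); tauto.
Qed.

Lemma glue_sys_is_sys : is_sys (glue_sys K (X1, p1) (X2, p2)).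
Proof.
  pose proof Hcomp as ((_ & refl1 & _) & (_ & refl2 & _) & _).
  simpl; split; [|split; [|split; [|split]]].
  - intros x y Hxy; exact (glue_le_dom Hcomp Hxy).
  - intros x [Hx|Hx]; [left|right; left]; auto.
  - exact glue_le_antisym.
  - exact glue_le_trans.
  - intros e _.
    apply finitely_preceded_mono with
      (S := fun x y => p1 x y \/ p2 x y \/
              (exists c, p1 x c /\ p2 c y) \/ (exists c, p2 x c /\ p1 c y)).
    + intros x y [H|[H|[[c [_ H]]|[c [_ H]]]]]; eauto 7.
    + pose proof (is_sys_finitely_preceded (proj1 Hcomp)) as F1.
      pose proof (is_sys_finitely_preceded (proj1 Hcomp')) as F2.
      repeat apply finitely_preceded_or; auto using finitely_preceded_comp.
Qed.

Lemma glue_sys_agree_on2 (Y : set E) :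
  (forall e, Y e -> X1 e -> X2 e) -> agree_on Y (glue_sys K (X1, p1) (X2, p2)) (X2, p2).
Proof.
  intros HY; eapply agree_on_trans; [|exact (glue_sys_agree_on1 Hcomp' Y HY)].
  split; simpl; [tauto|intros; apply glue_le_comm].
Qed.

End GlueSys.

Section Source.

Variables (LO CH : Type) (ends : CH -> option (LO * LO)) (Cs Ccut : set CH).

Lemma at_loc_connects (l m : LO) (c : CH) :
  at_loc ends l c -> at_loc ends m c -> l = m \/ connects ends c l m.
Proof.
  unfold connects; intros [l' Hl] [m' Hm].
  destruct Hl as [Hl|Hl], Hm as [Hm|Hm]; rewrite Hl in Hm; injection Hm;
    intros; subst; auto.
Qed.

Definition source_loc (l : LO) : Prop :=
  exists ls cs p, Cs cs /\ at_loc ends ls cs /\ upath ends l ls p /\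
    (forall c, In c p -> ~ Ccut c).

Definition source_chan (c : CH) : Prop :=
  Cs c \/ exists l, source_loc l /\ at_loc ends l c.

Lemma source_loc_of_Cs c l : Cs c -> at_loc ends l c -> source_loc l.
Proof.
  intros Hc Hl; exists l, c, []; repeat split; auto using upath_nil.
Qed.

Lemma source_loc_connects c l m :
  connects ends c l m -> ~ Ccut c -> source_loc m -> source_loc l.
Proof.
  intros Hc Nc (ls & cs & p & Hcs & Hls & Hp & Hcut).
  exists ls, cs, (c :: p); repeat split; eauto using upath_cons.
  intros c' [<-|Hc']; auto.
Qed.

Lemma source_chan_at_other_loc l c :
  ~ source_loc l -> at_loc ends l c -> source_chan c -> Ccut c.
Proof.
  intros Nl Hl [Hc|[m [Hm Hmc]]].
  - exfalso; exact (Nl (source_loc_of_Cs Hc Hl)).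
  - apply NNPP; intro Nc.
    destruct (at_loc_connects Hl Hmc) as [<-|Hlm]; auto.
    exact (Nl (source_loc_connects Hlm Nc Hm)).
Qed.

Lemma source_chan_not_Co Co c :
  undirected_cut ends Cs Ccut Co -> Co c -> ~ source_chan c.
Proof.
  intros (_ & Dso & _ & Hpath) Hc [Hs|[m [(ls & cs & p & Hcs & Hls & Hp & Np) Hm]]].
  - exact (Dso c (conj Hs Hc)).
  - destruct (Hpath m ls p c cs Hc Hm Hcs Hls Hp) as [c' [Hin Hc']].
    exact (Np c' Hin Hc').
Qed.

End Source.

Section Executions.

Variables (LO CH D E : Type) (ends : CH -> option (LO * LO))
  (traces : LO -> set (trace CH D)) (chan : E -> CH) (msg : E -> D).

Lemma rank_ext (le le' : E -> E -> Prop) (S S' : set E) e n :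
  (forall e, S e <-> S' e) -> (forall x y, S x -> S y -> (le x y <-> le' x y)) ->
  S e -> rank le S e n -> rank le' S' e n.
Proof.
  intros HS Hle He [l [Hnd [Hlen Hin]]].
  exists l; split; [exact Hnd|split; [exact Hlen|]].
  intros x; rewrite Hin; split; intros [Hx [Hxe Hne]].
  - split; [apply HS, Hx|split; [apply Hle|]]; auto.
  - apply HS in Hx; split; [exact Hx|split; [apply (Hle x e)|]]; auto.
Qed.

Lemma reads_ext (le le' : E -> E -> Prop) (S S' : set E) t :
  (forall e, S e <-> S' e) -> (forall x y, S x -> S y -> (le x y <-> le' x y)) ->
  reads chan msg le S t -> reads chan msg le' S' t.
Proof.
  intros HS Hle Hr n; specialize (Hr n); destruct (t n) as [lab|].
  - destruct Hr as [e [He [Hrk Hlab]]].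
    exists e; split; [apply HS, He|split; [eapply rank_ext|]]; eauto.
  - intros [e [He Hrk]]; apply Hr; exists e.
    assert (He' : S e) by (apply HS, He).
    split; [exact He'|]; eapply rank_ext; [| |exact He|exact Hrk].
    + intros x; symmetry; apply HS.
    + intros x y Hx Hy; symmetry; apply Hle; apply HS; assumption.
Qed.

Definition loc_run (A : sys E) (l : LO) : Prop :=
  let S := fun e => fst A e /\ at_loc ends l (chan e) in
  (forall x y, S x -> S y -> snd A x y \/ snd A y x) /\
  exists t, traces l t /\ reads chan msg (snd A) S t.

Lemma exec_loc_run A :
  exec ends traces chan msg A <-> is_sys A /\ forall l, loc_run A l.
Proof. reflexivity. Qed.

Lemma loc_run_agree_on A A' l :
  agree_on (fun e => at_loc ends l (chan e)) A A' -> loc_run A' l -> loc_run A l.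
Proof.
  intros [Hs Hr] [Hlin [t [Ht Hrd]]]; split.
  - intros x y [Hx Lx] [Hy Ly].
    rewrite (Hr x y Lx Ly), (Hr y x Ly Lx).
    apply Hlin; split; auto; apply Hs; auto.
  - exists t; split; [exact Ht|].
    eapply reads_ext; [| |exact Hrd].
    + intros e; split; intros [He Le]; split; auto; apply (Hs e Le); auto.
    + intros x y [_ Lx] [_ Ly]; symmetry; auto.
Qed.

End Executions.

Definition glue_across (LO CH E : Type) (ends : CH -> option (LO * LO)) (chan : E -> CH)
  (Cs Ccut : set CH) (A1 A2 : sys E) : sys E :=
  glue_sys (fun e => Ccut (chan e))
    (restrict chan (fun c => ~ source_chan ends Cs Ccut c \/ Ccut c) A1)
    (restrict chan (fun c => source_chan ends Cs Ccut c \/ Ccut c) A2).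

Section GlueAcrossCut.

Variables (LO CH D E : Type) (ends : CH -> option (LO * LO))
  (traces : LO -> set (trace CH D)) (chan : E -> CH) (msg : E -> D)
  (Cs Ccut Co : set CH).
Hypothesis Hcut : undirected_cut ends Cs Ccut Co.
Variables A1 A2 : sys E.
Hypotheses (HA1 : exec ends traces chan msg A1) (HA2 : exec ends traces chan msg A2).
Hypothesis Hagree : restrict chan Ccut A1 = restrict chan Ccut A2.

Let src := source_chan ends Cs Ccut.
Let K := fun e => Ccut (chan e).
Let S1 := restrict chan (fun c => ~ src c \/ Ccut c) A1.
Let S2 := restrict chan (fun c => src c \/ Ccut c) A2.

Let agree_S1 (Y : set E) : (forall e, Y e -> ~ src (chan e) \/ Ccut (chan e)) ->
  agree_on Y S1 A1.
Proof. exact (agree_on_restrict chan Y (fun c => ~ src c \/ Ccut c) A1). Qed.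

Let agree_S2 (Y : set E) : (forall e, Y e -> src (chan e) \/ Ccut (chan e)) ->
  agree_on Y S2 A2.
Proof. exact (agree_on_restrict chan Y (fun c => src c \/ Ccut c) A2). Qed.

Let agree_K : agree_on K S1 S2.
Proof.
  apply (agree_on_trans (agree_S1 _ (fun e He => or_intror He))).
  apply (agree_on_trans (agree_on_restrict_eq Hagree)).
  apply agree_on_sym, agree_S2; intros e He; right; exact He.
Qed.

Lemma glue_across_compatible : glue_compatible K S1 S2.
Proof.
  split; [|split; [|split]].
  - apply is_sys_restrict, HA1.
  - apply is_sys_restrict, HA2.
  - intros e [_ H1] [_ H2]; unfold K; tauto.
  - exact agree_K.
Qed.

Lemma glue_across_exec : exec ends traces chan msg (glue_across ends chan Cs Ccut A1 A2).
Proof.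
  apply exec_loc_run; split.
  { apply glue_sys_is_sys, glue_across_compatible. }
  intros l; destruct (classic (source_loc ends Cs Ccut l)) as [Hl|Nl].
  - assert (Hsrc : forall e, at_loc ends l (chan e) -> src (chan e)).
    { intros e He; right; exists l; auto. }
    apply (loc_run_agree_on (A' := A2)); [|exact (proj2 HA2 l)].
    eapply agree_on_trans; [apply (glue_sys_agree_on2 glue_across_compatible)|].
    + intros e He H1; apply agree_K; [|exact H1].
      destruct H1 as [_ [N|Hc]]; [exfalso; exact (N (Hsrc e He))|exact Hc].
    + apply agree_S2; auto.
  - assert (Hcut_l : forall e, at_loc ends l (chan e) -> src (chan e) -> Ccut (chan e)).
    { intros e He; exact (source_chan_at_other_loc Nl He). }
    apply (loc_run_agree_on (A' := A1)); [|exact (proj2 HA1 l)].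
    eapply agree_on_trans; [apply (glue_sys_agree_on1 glue_across_compatible)|].
    + intros e He H2; apply agree_K; [|exact H2].
      destruct H2 as [_ [Hs|Hc]]; [exact (Hcut_l e He Hs)|exact Hc].
    + apply agree_S1; intros e He.
      destruct (classic (src (chan e))); auto.
Qed.

Lemma glue_across_Co :
  restrict chan Co (glue_across ends chan Cs Ccut A1 A2) = restrict chan Co A1.
Proof.
  pose proof Hcut as (_ & _ & Dcut & _).
  apply restrict_agree_on.
  eapply agree_on_trans; [apply (glue_sys_agree_on1 glue_across_compatible)|].
  - intros e Ho [_ [Hs|Hc]]; exfalso;
      [exact (source_chan_not_Co Hcut Ho Hs)|exact (Dcut _ (conj Hc Ho))].
  - apply agree_S1; intros e Ho; left; exact (source_chan_not_Co Hcut Ho).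
Qed.

Lemma glue_across_Cs :
  restrict chan Cs (glue_across ends chan Cs Ccut A1 A2) = restrict chan Cs A2.
Proof.
  pose proof Hcut as (Dcut & _).
  apply restrict_agree_on.
  eapply agree_on_trans; [apply (glue_sys_agree_on2 glue_across_compatible)|].
  - intros e Hs [_ [N|Hc]]; exfalso; [exact (N (or_introl Hs))|exact (Dcut _ (conj Hs Hc))].
  - apply agree_S2; intros e Hs; left; left; exact Hs.
Qed.

End GlueAcrossCut.

Section CompatibleRuns.

Variables (LO CH D E : Type) (ends : CH -> option (LO * LO))
  (traces : LO -> set (trace CH D)) (chan : E -> CH) (msg : E -> D).

Lemma J_is_run (C C' : set CH) (B X : sys E) :
  J ends traces chan msg C C' B X -> is_run ends traces chan msg C' X.
Proof. intros (A & HA & _ & HX); exists A; auto. Qed.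

Lemma J_through_cut (Cs Ccut Co : set CH) (Bo : sys E) :
  undirected_cut ends Cs Ccut Co ->
  J ends traces chan msg Co Cs Bo =
  bigcup (fun i : {Bc | J ends traces chan msg Co Ccut Bo Bc} =>
            J ends traces chan msg Ccut Cs (proj1_sig i)).
Proof.
  intros Hcut; apply functional_extensionality; intro X;
    apply propositional_extensionality; split.
  - intros (A & HA & HAo & HX).
    assert (Hc : J ends traces chan msg Co Ccut Bo (restrict chan Ccut A))
      by (exists A; auto).
    exists (exist _ _ Hc), A; auto.
  - intros [[Bc (A1 & HA1 & HA1o & ->)] (A2 & HA2 & HA2c & HX)]; simpl in HA2c.
    exists (glue_across ends chan Cs Ccut A1 A2); split; [|split].
    + exact (glue_across_exec Cs HA1 HA2 (eq_sym HA2c)).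
    + rewrite (glue_across_Co Hcut HA1 HA2 (eq_sym HA2c)); exact HA1o.
    + rewrite (glue_across_Cs Hcut HA1 HA2 (eq_sym HA2c)); exact HX.
Qed.

End CompatibleRuns.

Theorem theorem2 (LO CH D : Type) (ends : CH -> option (LO * LO))
  (traces : LO -> set (trace CH D)) (Hframe : is_frame ends traces)
  (E : Type) (chan : E -> CH) (msg : E -> D)
  (Cs Ccut Co : set CH) (f : set (sys E) -> set (sys E)) :
  undirected_cut ends Cs Ccut Co ->
  f_limits ends traces chan msg f Cs Ccut ->
  f_limits ends traces chan msg f Cs Co.
Proof.
  intros Hcut [Hblur Hlim]; split; [exact Hblur|].
  intros Bo _; split; [exact Hblur|].
  rewrite (J_through_cut traces chan msg Bo Hcut).
  destruct Hblur as (_ & _ & _ & Hunion).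
  rewrite Hunion by (intros i X; apply J_is_run).
  f_equal; apply functional_extensionality; intros [Bc HBc].
  exact (proj2 (Hlim Bc (J_is_run HBc))).
Qed.
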